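(* Consider instances of the Stable Matching Problem with Couples (SMP-C) that possess a resident optimal matching, and let $y$ be the mechanism that maps each such instance (given by the stated ROLs) to its resident optimal matching. Then: (1) (Truncation-proofness.) Let $\mathcal{I}$ be an SMP-C instance with resident optimal matching $\mu^*$, where all ROLs are the participants' true preferences. Let $a$ be a single doctor or a couple, and let $\mathcal{I}'$ be the instance obtained from $\mathcal{I}$ by replacing $a$'s ROL with a truncation of it, all other ROLs unchanged. If $\mathcal{I}'$ has a resident optimal matching $\mu'$, then it is not the case that $\mu'(a) \succ_a \mu^*(a)$, where $\succ_a$ is $a$'s true (original) preference. That is, $y$ is strategy-proof for residents when residents may only misreport via truncation. (2) (Reordering can be profitable.) $y$ is not in general strategy-proof when residents may misreport via reordering: there exists an SMP-C instance $\mathcal{I}$ (with true preferences) that has a unique stable matching $\mu^*$ (hence $\mu^*$ is resident optimal), a single doctor $d$, and a reordering of $d$'s ROL (a permutation of the same acceptable programs), all other ROLs unchanged, such that the resulting instance $\mathcal{I}'$ has a resident optimal matching $\mu'$ with $\mu'(d) \succ_d \mu^*(d)$ according to $d$'s true preferences.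
   Context: An SMP-C instance consists of a finite set $D$ of doctors, a finite set $P$ of programs, and a special element $\mathit{nil}$; write $D^+=D\cup\{\mathit{nil}\}$, $P^+=P\cup\{\mathit{nil}\}$. $D$ is partitioned into singles $S$ and coupled doctors $D\setminus S$; the couples form a set $C\subseteq (D\setminus S)\times(D\setminus S)$ of pairs such that every coupled doctor belongs to exactly one pair. Each program $p$ has a quota $q_p\ge 1$. Each participant gives a ranked order list (ROL), a strictly ordered list terminated by $\mathit{nil}$: singles rank elements of $P$, couples rank pairs in $P^+\times P^+$ (terminated by $(\mathit{nil},\mathit{nil})$), programs rank doctors. For a participant $a$, $x \succeq_a y$ means $x$ appears no later than $y$ on $a$'s ROL (or $x=y$); $x$ is acceptable to $a$ if $x\succeq_a \mathit{nil}$; alternatives not on the ROL are unacceptable. For a program $p$ and set $R$ of doctors, $\mathrm{ch}_p(R)$ is the maximal subset of $R$ consisting of acceptable doctors, of size at most $q_p$, such that every chosen doctor is ranked by $p$ above every unchosen doctor of $R$; $\mathrm{ch}_{\mathit{nil}}(R)=R$. A matching $\mu$ maps $D\to P^+$; $\mu^{-1}(p)$ is the set of doctors matched to $p$; for a couple $c=(d_1,d_2)$, $\mu(c)=(\mu(d_1),\mu(d_2))$. Let $\mathit{willAccept}(p,R,\mu)$ mean $R\subseteq \mathrm{ch}_p(\mu^{-1}(p)\cup R)$. Blocking pairs: (i) a single $d$ and $p\in P$ with $p\succ_d\mu(d)$ and $\mathit{willAccept}(p,\{d\},\mu)$; (ii) a couple $c=(d_1,d_2)$ and $(p_1,p_2)\in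 P^+\times P^+$ with $p_1\ne p_2$, $(p_1,p_2)\succ_c\mu(c)$, $\mathit{willAccept}(p_1,\{d_1\},\mu)$ and $\mathit{willAccept}(p_2,\{d_2\},\mu)$; (iii) a couple $c=(d_1,d_2)$ and $p\in P$ with $(p,p)\succ_c \mu(c)$ and $\mathit{willAccept}(p,\{d_1,d_2\},\mu)$. $\mu$ is individually rational if every single gets an acceptable program (or $\mathit{nil}$), every couple gets an acceptable pair (or $(\mathit{nil},\mathit{nil})$), and every program $p$ has $|\mu^{-1}(p)|\le q_p$ with all its matched doctors acceptable to it. $\mu$ is stable if it is individually rational and has no blocking pair. For matchings $\mu_1,\mu_2$, write $\mu_1\succeq_R\mu_2$ if $\mu_1(a)\succeq_a\mu_2(a)$ for every single and every couple $a$. A matching $\mu$ is resident optimal if it is stable and $\mu\succeq_R\mu'$ for every stable matching $\mu'$. A truncation of $a$'s ROL keeps an initial segment of the ROL (then terminated by $\mathit{nil}$, resp. $(\mathit{nil},\mathit{nil})$), making all later entries unacceptable. A reordering of $a$'s ROL lists the same acceptable alternatives in a different order. *)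

From mathcomp Require Import all_boot.
Set Implicit Arguments. Unset Strict Implicit. Unset Printing Implicit Defensive.

(* nil is represented by [None] (programs) and [(None, None)] (couple pairs).  *)
(* A ROL is stored as the sequence of its acceptable alternatives, in order;  *)
(* the terminating nil is implicit (it sits at position [size s]).           *)

Section SMPC.
Variables (D P : finType).

Record instance := Instance {
  single : {set D};
  couples : {set D * D};
  quota : P -> nat;
  rolS : D -> seq P;
  rolC : D * D -> seq (option P * option P);
  rolP : P -> seq D
}.

Definition wf (I : instance) : Prop :=
  (forall p, 1 <= quota I p) /\
  (forall d, d \in single I -> uniq (rolS I d)) /\
  (forall c, c \in couples I -> uniq (rolC I c) /\ (None, None) \notin rolC I c) /\
  (forall p, uniq (rolP I p)) /\
  (forall c, c \in couples I ->
     [/\ c.1 \notin single I, c.2 \notin single I & c.1 != c.2]) /\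
  (forall d, d \notin single I ->
     #|[set c in couples I | (c.1 == d) || (c.2 == d)]| = 1).

(* Position of an alternative on a ROL [s] terminated by [nilx]; unlisted    *)
(* (unacceptable) alternatives come after nil.                                *)
Definition rk (X : eqType) (nilx : X) (s : seq X) (x : X) : nat :=
  if x == nilx then size s else if x \in s then index x s else (size s).+1.

Definition rkS (I : instance) (d : D) (x : option P) : nat :=
  rk None (map Some (rolS I d)) x.
Definition rkC (I : instance) (c : D * D) (x : option P * option P) : nat :=
  rk (None, None) (rolC I c) x.

Definition ch_feasible (I : instance) (p : P) (R X : {set D}) : bool :=
  [&& X \subset R,
      [forall d in X, d \in rolP I p],
      #|X| <= quota I p &
      [forall d in X, forall d' in R :\: X,
         index d (rolP I p) < index d' (rolP I p)]].

Definition ch (I : instance) (p : option P) (R : {set D}) : {set D} :=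
  match p with
  | None => R
  | Some p => odflt set0 [pick X | maxset (ch_feasible I p R) X]
  end.

Definition matching := D -> option P.

Definition assigned (mu : matching) (p : P) : {set D} := [set d | mu d == Some p].

Definition willAccept (I : instance) (p : option P) (R : {set D}) (mu : matching) : Prop :=
  match p with
  | None => R \subset ch I None R
  | Some q => R \subset ch I (Some q) (assigned mu q :|: R)
  end.

Definition muC (mu : matching) (c : D * D) := (mu c.1, mu c.2).

Definition individually_rational (I : instance) (mu : matching) : Prop :=
  (forall d, d \in single I -> rkS I d (mu d) <= rkS I d None) /\
  (forall c, c \in couples I -> rkC I c (muC mu c) <= rkC I c (None, None)) /\
  (forall p, #|assigned mu p| <= quota I p /\
             forall d, d \in assigned mu p -> d \in rolP I p).

Definition blocking_single (I : instance) (mu : matching) (d : D) (p : P) : Prop :=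
  d \in single I /\ rkS I d (Some p) < rkS I d (mu d) /\
  willAccept I (Some p) [set d] mu.

Definition blocking_couple2 (I : instance) (mu : matching) (c : D * D)
  (pp : option P * option P) : Prop :=
  c \in couples I /\ pp.1 != pp.2 /\ rkC I c pp < rkC I c (muC mu c) /\
  willAccept I pp.1 [set c.1] mu /\ willAccept I pp.2 [set c.2] mu.

Definition blocking_couple1 (I : instance) (mu : matching) (c : D * D) (p : P) : Prop :=
  c \in couples I /\ rkC I c (Some p, Some p) < rkC I c (muC mu c) /\
  willAccept I (Some p) [set c.1; c.2] mu.

Definition stable (I : instance) (mu : matching) : Prop :=
  individually_rational I mu /\
  (forall d p, ~ blocking_single I mu d p) /\
  (forall c pp, ~ blocking_couple2 I mu c pp) /\
  (forall c p, ~ blocking_couple1 I mu c p).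

Definition resident_optimal (I : instance) (mu : matching) : Prop :=
  stable I mu /\
  forall mu', stable I mu' ->
    (forall d, d \in single I -> rkS I d (mu d) <= rkS I d (mu' d)) /\
    (forall c, c \in couples I -> rkC I c (muC mu c) <= rkC I c (muC mu' c)).

Definition replS (I : instance) (d : D) (s : seq P) : instance :=
  Instance (single I) (couples I) (quota I)
    (fun d' => if d' == d then s else rolS I d') (rolC I) (rolP I).
Definition replC (I : instance) (c : D * D) (s : seq (option P * option P)) : instance :=
  Instance (single I) (couples I) (quota I) (rolS I)
    (fun c' => if c' == c then s else rolC I c') (rolP I).

End SMPC.

From mathcomp Require Import all_boot.
From Stdlib Require Import FunctionalExtensionality.
Set Implicit Arguments. Unset Strict Implicit. Unset Printing Implicit Defensive.

(* Truncation: a match that is acceptable for a truncated ROL lies in the kept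
   prefix, and so does everything the resident truly prefers to it.  Hence a
   matching stable for the truncated report, in which the resident is matched,
   is stable for the true preferences, and resident optimality of the truthful
   outcome rules out any gain.  Reordering: with unit quotas a program accepts a
   doctor iff it ranks him above its current assignee, which makes stability
   decidable on a finite instance; a single, a couple and two programs then
   give a profitable reordering, checked over all 27 matchings. *)

Section Ranks.
Variables (X : eqType) (nilx : X).

Lemma mem_of_rk_le_nil s x : x != nilx -> rk nilx s x <= rk nilx s nilx -> x \in s.
Proof. by rewrite /rk eqxx => /negbTE ->; case: ifP; rewrite // ltnn. Qed.

Lemma rk_mem s x : x != nilx -> x \in s -> rk nilx s x = index x s.
Proof. by rewrite /rk => /negbTE -> ->. Qed.

Lemma index_take_mem (s : seq X) k x : x \in take k s -> index x (take k s) = index x s.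
Proof. by move=> xk; rewrite -{2}(cat_take_drop k s) index_cat xk. Qed.

Lemma rk_take_refines s k y :
  y != nilx -> rk nilx (take k s) y <= rk nilx (take k s) nilx ->
  rk nilx s y <= rk nilx s nilx /\
  forall x, rk nilx s x < rk nilx s y -> rk nilx (take k s) x < rk nilx (take k s) y.
Proof.
move=> ynil /(mem_of_rk_le_nil ynil) yk; have ys := mem_take yk.
have ylt : index y s < size s by rewrite index_mem.
rewrite (rk_mem ynil ys) (rk_mem ynil yk) (index_take_mem yk).
split=> [|x]; first by rewrite /rk eqxx ltnW.
rewrite /rk; case: eqVneq => [_|_]; first by rewrite ltnNge ltnW.
case: ifP => xs; last by rewrite ltnNge ltnW // ltnS ltnW.
move=> xy; have xk : x \in take k s by rewrite in_take // (ltn_trans xy (index_ltn yk)).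
by rewrite xk index_take_mem.
Qed.

End Ranks.

Section Truncation.
Variables D P : finType.
Implicit Types (I J : instance D P) (mu : matching D P).

Lemma willAccept_eq I J :
  quota J = quota I -> rolP J = rolP I -> willAccept J = willAccept I.
Proof. by move=> eq_quota eq_rolP; rewrite /willAccept /ch /ch_feasible eq_quota eq_rolP. Qed.

Lemma stable_of_refined_rols I J mu :
  single J = single I -> couples J = couples I ->
  quota J = quota I -> rolP J = rolP I ->
  (forall d, d \in single I -> rkS I d (mu d) <= rkS I d None /\
     forall x, rkS I d x < rkS I d (mu d) -> rkS J d x < rkS J d (mu d)) ->
  (forall c, c \in couples I -> rkC I c (muC mu c) <= rkC I c (None, None) /\
     forall x, rkC I c x < rkC I c (muC mu c) -> rkC J c x < rkC J c (muC mu c)) ->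
  stable J mu -> stable I mu.
Proof.
move=> eq_single eq_couples eq_quota eq_rolP refS refC.
have waE := willAccept_eq eq_quota eq_rolP.
move=> [[_ [_ irP]] [noS [noC2 noC1]]].
split; [split; [|split] | split; [|split]].
- by move=> d /refS [].
- by move=> c /refC [].
- by rewrite -eq_quota -eq_rolP.
- move=> d p [dS [better acc]]; apply: (noS d p).
  by do ![split]; rewrite ?eq_single ?waE //; apply: (refS d dS).2.
- move=> c pp [cC [neq [better [acc1 acc2]]]]; apply: (noC2 c pp).
  by do ![split]; rewrite ?eq_couples ?waE //; apply: (refC c cC).2.
- move=> c p [cC [better acc]]; apply: (noC1 c p).
  by do ![split]; rewrite ?eq_couples ?waE //; apply: (refC c cC).2.
Qed.

Lemma stable_untruncate_single I d k mu :
  mu d != None -> stable (replS I d (take k (rolS I d))) mu -> stable I mu.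
Proof.
move=> assigned_d st; apply: stable_of_refined_rols (st) => // [d' d'S|c cC].
- have := st.1.1 d' d'S; rewrite /rkS /=.
  case: eqVneq => [->|_]; last by move=> ir; split.
  by rewrite map_take; exact: rk_take_refines.
- by split=> [|//]; apply: st.1.2.1.
Qed.

Lemma stable_untruncate_couple I c k mu :
  muC mu c != (None, None) -> stable (replC I c (take k (rolC I c))) mu -> stable I mu.
Proof.
move=> assigned_c st; apply: stable_of_refined_rols (st) => // [d dS|c' c'C].
- by split=> [|//]; apply: st.1.1.
- have := st.1.2.1 c' c'C; rewrite /rkC /=.
  case: eqVneq => [->|_]; last by move=> ir; split.
  exact: rk_take_refines.
Qed.

Lemma truncation_proof_single I mu d k mu' :
  resident_optimal I mu -> d \in single I ->
  resident_optimal (replS I d (take k (rolS I d))) mu' ->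
  rkS I d (mu d) <= rkS I d (mu' d).
Proof.
move=> [[[irS _] _] optimal] dS [st' _].
case: (eqVneq (mu' d) None) => [->|assigned_d]; first exact: irS.
exact: (optimal mu' (stable_untruncate_single assigned_d st')).1.
Qed.

Lemma truncation_proof_couple I mu c k mu' :
  resident_optimal I mu -> c \in couples I ->
  resident_optimal (replC I c (take k (rolC I c))) mu' ->
  rkC I c (muC mu c) <= rkC I c (muC mu' c).
Proof.
move=> [[[_ [irC _]] _] optimal] cC [st' _].
case: (eqVneq (muC mu' c) (None, None)) => [->|assigned_c]; first exact: irC.
exact: (optimal mu' (stable_untruncate_couple assigned_c st')).2.
Qed.

End Truncation.

Section UnitQuota.
Variables D P : finType.
Variable I : instance D P.
Implicit Types (p : P) (mu : matching D P) (R : {set D}).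

Lemma ch_maxset p R : maxset (ch_feasible I p R) (ch I (Some p) R).
Proof.
rewrite /ch; case: pickP => [X //|none_max]; exfalso.
have feasible0 : ch_feasible I p R set0.
  by apply/and4P; rewrite sub0set cards0; split=> //; apply/forall_inP => d; rewrite inE.
by have [X maxX _] := maxset_exists feasible0; rewrite none_max in maxX.
Qed.

Hypothesis quota1 : forall p, quota I p = 1.

Lemma card_ch_le1 p R : #|ch I (Some p) R| <= 1.
Proof. by rewrite -(quota1 p); case/and4P: (maxsetp (ch_maxset p R)). Qed.

Lemma willAccept_pair_quota1 p d1 d2 mu :
  d1 != d2 -> ~ willAccept I (Some p) [set d1; d2] mu.
Proof.
move=> neq /subsetP accepted.
have /card_le1_eqP same := card_ch_le1 p (assigned mu p :|: [set d1; d2]).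
by move/eqP: neq; apply; apply: same; apply: accepted; rewrite !inE eqxx ?orbT.
Qed.

Definition best_in p R d :=
  [/\ d \in R, d \in rolP I p &
      forall d', d' \in R -> d' \in rolP I p -> index d (rolP I p) <= index d' (rolP I p)].

Lemma best_in_ch p R d : d \in ch I (Some p) R -> best_in p R d.
Proof.
have /maxsetP [/and4P [subR accX _ topX] _] := ch_maxset p R.
move=> dX; split=> [|| d' d'R d'acc]; first exact: subsetP subR d dX.
  exact: (forall_inP accX).
case: (boolP (d' \in ch I (Some p) R)) => d'X.
  by rewrite (card_le1_eqP (card_ch_le1 p R) d' d d'X dX).
by apply: ltnW; move/forall_inP: topX => /(_ d dX)/forall_inP; apply; rewrite inE d'X.
Qed.

Lemma ch_best_in p R d : best_in p R d -> d \in ch I (Some p) R.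
Proof.
move=> [dR dacc dtop]; have /maxsetP [/and4P [subR accX _ topX] maxX] := ch_maxset p R.
apply/negPn/negP => dX; case: (set_0Vmem (ch I (Some p) R)) => [X0 | [x xX]].
  have feasible_d : ch_feasible I p R [set d].
    apply/and4P; split; rewrite ?sub1set ?cards1 ?quota1 //.
      by apply/forall_inP => z /set1P ->.
    apply/forall_inP => z /set1P -> ; apply/forall_inP => w /setDP [wR].
    rewrite in_set1 => wd.
    case: (boolP (w \in rolP I p)) => wacc; last by rewrite (memNindex wacc) index_mem.
    rewrite ltn_neqAle dtop // andbT; apply: contra wd => /eqP same_index.
    by rewrite (index_inj d dacc wacc same_index).
  have ch_d : [set d] = ch I (Some p) R by apply: maxX feasible_d _; rewrite X0 sub0set.
  by move: dX; rewrite -ch_d set11.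
have : index x (rolP I p) < index d (rolP I p).
  by move/forall_inP: topX => /(_ x xX)/forall_inP; apply; rewrite inE dX.
by rewrite ltnNge dtop // ?(subsetP subR) // (forall_inP accX).
Qed.

Variable ds : seq D.
Hypothesis ds_full : forall d, d \in ds.

Definition willAcceptb mu p d : bool :=
  (d \in rolP I p) &&
  all (fun d' => (mu d' == Some p) ==> (d' \in rolP I p) ==>
                 (index d (rolP I p) <= index d' (rolP I p))) ds.

Lemma willAccept_quota1P mu p d :
  willAccept I (Some p) [set d] mu <-> willAcceptb mu p d.
Proof.
rewrite /willAccept sub1set; split=> [/best_in_ch [_ dacc dtop] | /andP [dacc /allP dtop]].
  rewrite /willAcceptb dacc; apply/allP => d' _; apply/implyP => assigned'.
  by apply/implyP; apply: dtop; rewrite !inE assigned'.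
apply: ch_best_in; split=> // [|d']; first by rewrite !inE eqxx orbT.
rewrite !inE => /orP [assigned' | /eqP ->] // d'acc.
by have /implyP/(_ assigned')/implyP := dtop d' (ds_full d'); apply.
Qed.

Definition willAcceptb_opt mu (po : option P) d : bool :=
  if po is Some p then willAcceptb mu p d else true.

Lemma willAccept_opt_quota1P mu po d :
  willAccept I po [set d] mu <-> willAcceptb_opt mu po d.
Proof. by case: po => [p|]; [apply: willAccept_quota1P | rewrite /willAccept /ch subxx]. Qed.

Hypothesis ds_uniq : uniq ds.

Lemma card_assigned mu p : #|assigned mu p| = count (fun d => mu d == Some p) ds.
Proof.
rewrite -size_filter -(card_uniqP (filter_uniq _ ds_uniq)).
by apply: eq_card => d; rewrite inE mem_filter ds_full andbT.
Qed.

Variables (ps : seq P) (ss : seq D) (cs : seq (D * D)).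
Hypotheses (ps_full : forall p, p \in ps) (single_ss : single I =i ss)
  (couples_cs : couples I =i cs) (couple_distinct : forall c, c \in couples I -> c.1 != c.2).

Definition stableb mu : bool :=
  let pos := None :: map Some ps in
  [&& all (fun d => rkS I d (mu d) <= rkS I d None) ss,
      all (fun c => rkC I c (muC mu c) <= rkC I c (None, None)) cs,
      all (fun p => (count (fun d => mu d == Some p) ds <= quota I p) &&
                    all (fun d => (mu d == Some p) ==> (d \in rolP I p)) ds) ps,
      all (fun d => all (fun p =>
             ~~ ((rkS I d (Some p) < rkS I d (mu d)) && willAcceptb mu p d)) ps) ss &
      all (fun c => all (fun pp =>
             ~~ [&& pp.1 != pp.2, rkC I c pp < rkC I c (muC mu c),
                    willAcceptb_opt mu pp.1 c.1 & willAcceptb_opt mu pp.2 c.2])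
             [seq (x, y) | x <- pos, y <- pos]) cs].

Lemma stable_stableb mu : stable I mu -> stableb mu.
Proof.
move=> [[irS [irC irP]] [noS [noC2 _]]]; apply/and5P; split.
- by apply/allP => d; rewrite -single_ss; apply: irS.
- by apply/allP => c; rewrite -couples_cs; apply: irC.
- apply/allP => p _; have [card_p acc_p] := irP p.
  rewrite -card_assigned card_p; apply/allP => d _; apply/implyP => assigned_d.
  by apply: acc_p; rewrite inE.
- apply/allP => d; rewrite -single_ss => dS; apply/allP => p _.
  apply/negP => /andP [better /willAccept_quota1P acc].
  by apply: (noS d p).
- apply/allP => c; rewrite -couples_cs => cC; apply/allP => -[p1 p2] _.
  apply/negP => /and4P [neq better /willAccept_opt_quota1P acc1 /willAccept_opt_quota1P acc2].
  by apply: (noC2 c (p1, p2)).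
Qed.

Lemma stableb_stable mu : stableb mu -> stable I mu.
Proof.
have pos_full (po : option P) : po \in None :: map Some ps.
  by case: po => [p|]; rewrite inE ?mem_map ?ps_full ?orbT //; move=> ? ? [].
move=> /and5P [/allP irS /allP irC /allP irP /allP noS /allP noC2].
split; [split; [|split] | split; [|split]].
- by move=> d; rewrite single_ss; apply: irS.
- by move=> c; rewrite couples_cs; apply: irC.
- move=> p; have /andP [card_p /allP acc_p] := irP p (ps_full p).
  split=> [|d]; first by rewrite card_assigned.
  by rewrite inE => assigned_d; have /implyP := acc_p d (ds_full d); apply.
- move=> d p [dS [better /willAccept_quota1P acc]]; rewrite single_ss in dS.
  by have /allP /(_ p (ps_full p)) := noS d dS; rewrite better acc.
- move=> c [p1 p2] [cC [neq [better [/willAccept_opt_quota1P acc1 /willAccept_opt_quota1P acc2]]]].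
  rewrite couples_cs in cC; have /allP /(_ (p1, p2)) := noC2 c cC.
  by rewrite allpairs_f ?pos_full // neq better acc1 acc2 => /(_ isT).
- by move=> c p [cC [_ acc]]; apply: (willAccept_pair_quota1 (couple_distinct cC) acc).
Qed.

Lemma stableP mu : stable I mu <-> stableb mu.
Proof. by split; [apply: stable_stableb | apply: stableb_stable]. Qed.

End UnitQuota.

Definition Doctor : finType := option bool.
Definition Program : finType := bool.

Definition sd : Doctor := None.
Definition ca : Doctor := Some true.
Definition cb : Doctor := Some false.
Definition p1 : Program := true.
Definition p2 : Program := false.

(* The single [sd] is unmatched in the only stable matching: were it at [p2]
   (its true first choice), the couple would move to [(p1, p2)] and [p2], which
   ranks [cb] first, would drop [sd].  Listing [p1] first lets [sd] take [p1],
   leaving the couple its first choice [(p2, nil)]. *)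
Definition true_instance : instance Doctor Program :=
  Instance [set sd] [set (ca, cb)] (fun _ => 1)
    (fun _ => [:: p2; p1])
    (fun _ => [:: (Some p2, None); (Some p1, Some p2)])
    (fun p => if p == p1 then [:: cb; ca; sd] else [:: cb; sd; ca]).

Definition misreport : seq Program := [:: p1; p2].
Definition reported_instance := replS true_instance sd misreport.

Definition matching_of (x y z : option Program) : matching Doctor Program :=
  fun d => if d == sd then x else if d == ca then y else z.

Definition mu_true := matching_of None (Some p1) (Some p2).
Definition mu_reported := matching_of (Some p1) (Some p2) None.

Definition doctors : seq Doctor := [:: sd; ca; cb].
Definition programs : seq Program := [:: p1; p2].
Definition program_options : seq (option Program) := [:: None; Some p1; Some p2].

Lemma forall_matching (f : pred (matching Doctor Program)) :
  all (fun x => all (fun y => all (fun z => f (matching_of x y z))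
    program_options) program_options) program_options ->
  forall mu, f mu.
Proof.
have options_full (po : option Program) : po \in program_options by case: po => [[]|].
move=> /allP all_f mu.
have /allP/(_ _ (options_full (mu ca)))/allP := all_f _ (options_full (mu sd)).
move=> /(_ _ (options_full (mu cb))); congr (is_true (f _)).
by apply: functional_extensionality => -[[]|].
Qed.

Lemma stable_exampleP (I : instance Doctor Program) mu :
  I = true_instance \/ I = reported_instance ->
  stable I mu <-> stableb I doctors programs [:: sd] [:: (ca, cb)] mu.
Proof.
move=> [->|->]; apply: stableP;
  by [ | case=> [[]|] | case | move=> ?; rewrite !inE | move=> ?; rewrite inE => /eqP ->].
Qed.

Lemma wf_true_instance : wf true_instance.
Proof.
split=> //; split=> //; split=> [c|]; first by rewrite inE => /eqP ->.
split=> [[]|] //; split=> [c|d]; first by rewrite inE => /eqP ->; rewrite !inE.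
rewrite inE => d_not_single.
have -> : [set c in [set (ca, cb)] | (c.1 == d) || (c.2 == d)] = [set (ca, cb)].
  apply/setP => c; rewrite !inE; case: eqVneq => [->|] //=.
  by move: d_not_single; case: d => [[]|].
exact: cards1.
Qed.

Lemma stable_true_instance : stable true_instance mu_true.
Proof. by apply/(stable_exampleP _ (or_introl erefl)); vm_compute. Qed.

Lemma unique_stable_true_instance mu : stable true_instance mu -> mu =1 mu_true.
Proof.
have : forall mu, stableb true_instance doctors programs [:: sd] [:: (ca, cb)] mu ==>
    [&& mu sd == None, mu ca == Some p1 & mu cb == Some p2].
  by apply: forall_matching; vm_compute.
move=> /(_ mu)/implyP all_stable /(stable_exampleP mu (or_introl erefl))/all_stable.
by case/and3P=> [/eqP e_sd /eqP e_ca /eqP e_cb] [[]|].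
Qed.

Lemma resident_optimal_reported : resident_optimal reported_instance mu_reported.
Proof.
split=> [|mu /(stable_exampleP mu (or_intror erefl)) st].
  by apply/(stable_exampleP _ (or_intror erefl)); vm_compute.
have : forall mu, stableb reported_instance doctors programs [:: sd] [:: (ca, cb)] mu ==>
    (rkS reported_instance sd (mu_reported sd) <= rkS reported_instance sd (mu sd)) &&
    (rkC reported_instance (ca, cb) (muC mu_reported (ca, cb)) <=
     rkC reported_instance (ca, cb) (muC mu (ca, cb))).
  by apply: forall_matching; vm_compute.
move=> /(_ mu)/implyP/(_ st)/andP [opt_sd opt_c].
by split=> [d|c]; rewrite inE => /eqP ->.
Qed.

Theorem theorem1 :
  (* (1) truncation-proofness *)
  (forall (D P : finType) (I : instance D P) (mu : matching D P),
     wf I -> resident_optimal I mu ->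
     (forall (d : D) (k : nat) (mu' : matching D P),
        d \in single I ->
        resident_optimal (replS I d (take k (rolS I d))) mu' ->
        ~ (rkS I d (mu' d) < rkS I d (mu d))) /\
     (forall (c : D * D) (k : nat) (mu' : matching D P),
        c \in couples I ->
        resident_optimal (replC I c (take k (rolC I c))) mu' ->
        ~ (rkC I c (muC mu' c) < rkC I c (muC mu c)))) /\
  (* (2) reordering can be profitable *)
  (exists (D P : finType) (I : instance D P) (mu : matching D P),
     wf I /\ stable I mu /\ (forall mu2, stable I mu2 -> mu2 =1 mu) /\
     exists (d : D) (s : seq P) (mu' : matching D P),
       [/\ d \in single I, perm_eq s (rolS I d), s != rolS I d,
           resident_optimal (replS I d s) mu' &
           rkS I d (mu' d) < rkS I d (mu d)]).
Proof.
split.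
  move=> D P I mu _ optimal; split=> [d k mu' dS optimal' | c k mu' cC optimal'].
    by rewrite ltnNge (truncation_proof_single optimal dS optimal').
  by rewrite ltnNge (truncation_proof_couple optimal cC optimal').
exists Doctor, Program, true_instance, mu_true; split; first exact: wf_true_instance.
split; first exact: stable_true_instance.
split; first exact: unique_stable_true_instance.
exists sd, misreport, mu_reported; split=> //; first by rewrite inE.
exact: resident_optimal_reported.
Qed.
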